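(* Let $R=(\mathcal{F},\mathcal{V},\mathcal{R})$ with $\mathcal{R}=\{\ell_1\to r_1,\dots,\ell_n\to r_n\}$ and $R'=(\mathcal{F}',\mathcal{V}',\mathcal{R}')$ be TRSs with $R\cong_{\mathbf{SVE}}R'$, $R\cong_{\mathbf{LFE}}R'$ or $R\cong_{\mathbf{LE}}R'$, witnessed by the local isomorphism $\phi=(\phi_1,\dots,\phi_n)$, so $\mathcal{R}'=\{\phi_1(\ell_1)\to\phi_1(r_1),\dots,\phi_n(\ell_n)\to\phi_n(r_n)\}$. Then: (i) If $s\to_R t$ for $s,t\in T(\mathcal{F},\mathcal{V})$, then there is $1\le i\le n$ with $\phi_i(s)\to_{R'}\phi_i(t)$. However, there exist TRSs $R,R'$ with $R\cong_{\mathbf{LFE}}R'$ (hence also $R\cong_{\mathbf{SVE}}R'$ and $R\cong_{\mathbf{LE}}R'$), a witnessing family $\phi$, terms $s,t$ and an index $i$ such that $s\to_R t$ but not $\phi_i(s)\to_{R'}\phi_i(t)$. (ii) If $\phi_i(s)\to_{\{\phi_i(\ell_i)\to\phi_i(r_i)\}}\phi_i(t)$ for some $i$ and $s,t\in T(\mathcal{F},\mathcal{V})$, then $s\to_R t$. However, there exist TRSs $R,R'$ with $R\cong_{\mathbf{LFE}}R'$, a witnessing family $\phi$, terms $s,t$ and an index $j$ such that $\phi_j(s)\to_{R'}\phi_j(t)$ but not $s\to_R t$. (iii) There exist TRSs $R,R'$ with $R\cong_{\mathbf{LFE}}R'$ such that $R$ is terminating but $R'$ is not terminating.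
   Context: Terms and TRSs: $\mathcal{F}$ is a finite set of function symbols with arity map $\mathrm{ar}:\mathcal{F}\to\mathbb{N}_0$, $\mathcal{V}$ a finite set of variables disjoint from $\mathcal{F}$, and $T(\mathcal{F},\mathcal{V})$ the usual set of first-order terms over them. $\mathrm{Var}(t)$ is the set of variables occurring in $t$. A term rewriting system (TRS) is a triple $R=(\mathcal{F},\mathcal{V},\mathcal{R})$ where $\mathcal{R}$ is a finite set of rules $\ell\to r$ with $\ell,r\in T(\mathcal{F},\mathcal{V})$, $\ell\notin\mathcal{V}$ and $\mathrm{Var}(r)\subseteq\mathrm{Var}(\ell)$; $\mathcal{F}$ and $\mathcal{V}$ contain all symbols occurring in the rules. Rewriting: $s\to_R t$ iff there are a context $C$ (a term over $\mathcal{F},\mathcal{V}$ with one hole), a rule $\ell\to r\in\mathcal{R}$ and a substitution $\sigma:\mathcal{V}\to T(\mathcal{F},\mathcal{V})$ with $s=C[\sigma(\ell)]$ and $t=C[\sigma(r)]$; for a single rule set $\{\ell\to r\}$ the relation $\to_{\{\ell\to r\}}$ is defined likewise. $R$ is terminating if there is no infinite sequence of $\to_R$-steps. Term isomorphisms: a term isomorphism $\phi:T(\mathcal{F},\mathcal{V})\to T(\mathcal{F}',\mathcal{V}')$ is a pair of bijections $\phi_{\mathcal{F}}:\mathcal{F}\to\mathcal{F}'$ with $\mathrm{ar}'(\phi_{\mathcal{F}}(f))=\mathrm{ar}(f)$ for all $f$, and $\phi_{\mathcal{V}}:\mathcal{V}\to\mathcal{V}'$, extended homomorphically to terms. We write $\phi|_{\mathcal{F}}=\phi_{\mathcal{F}}$,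 $\phi|_{\mathcal{V}}=\phi_{\mathcal{V}}$. It is $\mathcal{V}$-invariant if $\mathcal{V}=\mathcal{V}'$ and $\phi_{\mathcal{V}}=\mathrm{id}$. Normal forms: two distinct rules $\ell\to r$, $\ell'\to r'$ of $\mathcal{R}$ are equivalent (resp. $\mathcal{F}$-equivalent) if there is a term isomorphism (resp. a $\mathcal{V}$-invariant one) $\phi:T(\mathcal{F},\mathcal{V})\to T(\mathcal{F},\mathcal{V})$ with $\phi(\ell)=\ell'$ and $\phi(r)=r'$. $R$ is in normal form (resp. $\mathcal{F}$-normal form) if $\mathcal{R}$ contains no pair of equivalent (resp. $\mathcal{F}$-equivalent) rules. TRS isomorphisms: a local isomorphism from $R$ to $R'$ is a family $(\phi_1,\dots,\phi_n)$ of term isomorphisms $T(\mathcal{F},\mathcal{V})\to T(\mathcal{F}',\mathcal{V}')$ with $\{\phi_i(\ell_i)\to\phi_i(r_i):1\le i\le n\}=\mathcal{R}'$. $R\cong_{\mathbf{LE}}R'$ if both are in normal form and a local isomorphism exists; $R\cong_{\mathbf{SVE}}R'$ if both are in $\mathcal{F}$-normal form and there is a local isomorphism with $\phi_1|_{\mathcal{V}}=\dots=\phi_n|_{\mathcal{V}}$; $R\cong_{\mathbf{LFE}}R'$ if both are in $\mathcal{F}$-normal form and there is a local isomorphism all of whose $\phi_i$ are $\mathcal{V}$-invariant. *)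

From mathcomp Require Import all_boot.
From Stdlib Require List.

Record signature := Signature { fsym :> finType; arity : fsym -> nat }.
Arguments arity {s} _.

(* First-order terms (possibly ill-formed w.r.t. arities; see wf_term). *)
Inductive term (F V : Type) : Type :=
| Var : V -> term F V
| Fun : F -> seq (term F V) -> term F V.
Arguments Var {F V} _.
Arguments Fun {F V} _ _.

Inductive wf_term (S : signature) (V : Type) : term S V -> Prop :=
| wf_Var (x : V) : wf_term S V (Var x)
| wf_Fun (f : S) (ts : seq (term S V)) :
    size ts = arity f -> List.Forall (wf_term S V) ts -> wf_term S V (Fun f ts).
Arguments wf_term {S V} _.

Fixpoint vars {F V : Type} (t : term F V) : seq V :=
  match t with
  | Var x => [:: x]
  | Fun _ ts => flatten (map vars ts)
  end.

Fixpoint map_term {F F' V V' : Type} (g : F -> F') (h : V -> V')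
    (t : term F V) : term F' V' :=
  match t with
  | Var x => Var (h x)
  | Fun f ts => Fun (g f) (map (map_term g h) ts)
  end.

Fixpoint subst {F V : Type} (sigma : V -> term F V) (t : term F V) : term F V :=
  match t with
  | Var x => sigma x
  | Fun f ts => Fun f (map (subst sigma) ts)
  end.

Inductive ctx (F V : Type) : Type :=
| Hole : ctx F V
| CFun : F -> seq (term F V) -> ctx F V -> seq (term F V) -> ctx F V.
Arguments Hole {F V}.
Arguments CFun {F V} _ _ _ _.

Fixpoint fill {F V : Type} (C : ctx F V) (u : term F V) : term F V :=
  match C with
  | Hole => u
  | CFun f l C' r => Fun f (l ++ fill C' u :: r)
  end.

Definition rstep {F V : Type} (l r : term F V) (s t : term F V) : Prop :=
  exists (C : ctx F V) (sigma : V -> term F V),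
    s = fill C (subst sigma l) /\ t = fill C (subst sigma r).

Record trs (S : signature) (V : finType) := TRS {
  nrules : nat;
  rule : 'I_nrules -> term S V * term S V;
  rule_inj : injective rule;
  rule_wf : forall i, wf_term (rule i).1 /\ wf_term (rule i).2;
  rule_lhs_nonvar : forall i (x : V), (rule i).1 <> Var x;
  rule_vars : forall i (x : V),
      List.In x (vars (rule i).2) -> List.In x (vars (rule i).1) }.
Arguments nrules {S V} _.
Arguments rule {S V} _ _.

Definition rewrites {S : signature} {V : finType} (R : trs S V)
    (s t : term S V) : Prop :=
  exists i : 'I_(nrules R), rstep (rule R i).1 (rule R i).2 s t.

Definition terminating {S : signature} {V : finType} (R : trs S V) : Prop :=
  ~ exists f : nat -> term S V,
      forall k, wf_term (f k) /\ rewrites R (f k) (f k.+1).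

Record term_iso (S : signature) (V : finType) (S' : signature) (V' : finType) :=
  TermIso {
    isoF : S -> S';
    isoV : V -> V';
    isoF_bij : bijective isoF;
    isoV_bij : bijective isoV;
    isoF_arity : forall f : S, arity (isoF f) = arity f }.
Arguments isoF {S V S' V'} _ _.
Arguments isoV {S V S' V'} _ _.

Definition iso_app {S V S' V'} (phi : term_iso S V S' V') (t : term S V)
  : term S' V' := map_term (isoF phi) (isoV phi) t.

Definition iso_rule {S V S' V'} (phi : term_iso S V S' V')
    (rho : term S V * term S V) : term S' V' * term S' V' :=
  (iso_app phi rho.1, iso_app phi rho.2).

(* V-invariance: V = V' and phi|_V = id. *)
Definition V_invariant {S V S' V'} (phi : term_iso S V S' V') : Prop :=
  exists e : (V : Type) = (V' : Type),
    forall x : V, isoV phi x = eq_rect (V : Type) (fun T : Type => T) x (V' : Type) e.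

Definition rules_equiv {S : signature} {V : finType}
    (rho rho' : term S V * term S V) : Prop :=
  exists phi : term_iso S V S V, iso_rule phi rho = rho'.

Definition rules_Fequiv {S : signature} {V : finType}
    (rho rho' : term S V * term S V) : Prop :=
  exists phi : term_iso S V S V,
    (forall x : V, isoV phi x = x) /\ iso_rule phi rho = rho'.

(* distinct rules <-> distinct indices, since rule is injective *)
Definition normal_form {S V} (R : trs S V) : Prop :=
  forall i j, i <> j -> ~ rules_equiv (rule R i) (rule R j).

Definition F_normal_form {S V} (R : trs S V) : Prop :=
  forall i j, i <> j -> ~ rules_Fequiv (rule R i) (rule R j).

Definition local_iso {S V S' V'} (R : trs S V) (R' : trs S' V')
    (phi : 'I_(nrules R) -> term_iso S V S' V') : Prop :=
  forall rho' : term S' V' * term S' V',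
    (exists j, rule R' j = rho') <->
    (exists i, iso_rule (phi i) (rule R i) = rho').

Definition LE_witness {S V S' V'} (R : trs S V) (R' : trs S' V')
    (phi : 'I_(nrules R) -> term_iso S V S' V') : Prop :=
  normal_form R /\ normal_form R' /\ local_iso R R' phi.

Definition SVE_witness {S V S' V'} (R : trs S V) (R' : trs S' V')
    (phi : 'I_(nrules R) -> term_iso S V S' V') : Prop :=
  F_normal_form R /\ F_normal_form R' /\ local_iso R R' phi /\
  (forall i j (x : V), isoV (phi i) x = isoV (phi j) x).

Definition LFE_witness {S V S' V'} (R : trs S V) (R' : trs S' V')
    (phi : 'I_(nrules R) -> term_iso S V S' V') : Prop :=
  F_normal_form R /\ F_normal_form R' /\ local_iso R R' phi /\
  (forall i, V_invariant (phi i)).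

Definition iso_LE {S V S' V'} (R : trs S V) (R' : trs S' V') : Prop :=
  exists phi, LE_witness R R' phi.
Definition iso_SVE {S V S' V'} (R : trs S V) (R' : trs S' V') : Prop :=
  exists phi, SVE_witness R R' phi.
Definition iso_LFE {S V S' V'} (R : trs S V) (R' : trs S' V') : Prop :=
  exists phi, LFE_witness R R' phi.

From HB Require Import structures.
From mathcomp Require Import all_boot.
From Stdlib Require Import Lia.
From mathcomp Require Import zify.

(* The positive halves of (i) and (ii) rest on one fact: renaming symbols and
   variables homomorphically, with an invertible variable renaming, maps every
   step s ->_{l -> r} t to a step between the renamed terms (the context and
   the substitution are renamed along).  Applied to phi_i this gives (i);
   applied to the inverse renaming of phi_i it gives (ii).  Neither needs the
   normal-form conditions, only that R' consists of the renamed rules.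

   All negative statements use one example over F = {a, b, f}, f unary:
     R = { a -> f(b), f(a) -> b },   R' = { a -> f(b), f(b) -> a },
   with phi_1 = id and phi_2 swapping a and b.  Both are V-invariant and the
   left-hand sides have different root arities, so phi witnesses LFE, SVE and
   LE at once.  The constant b is a normal form of R and of R', refuting the
   converses of (i) and (ii) at index 2; R terminates since the weight
   a = 2, f = 1, b = 0 decreases, while R' cycles through a -> f(b) -> a. *)

Fixpoint term_nested_ind {F V : Type} (P : term F V -> Prop)
  (HVar : forall x, P (Var x))
  (HFun : forall f ts, (forall u, List.In u ts -> P u) -> P (Fun f ts))
  (t : term F V) {struct t} : P t :=
  match t with
  | Var x => HVar x
  | Fun f ts => HFun f ts
      ((fix args (l : seq (term F V)) : forall u, List.In u l -> P u :=
          match l with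
          | [::] => fun u inl => False_ind _ inl
          | v :: l' => fun u inl =>
              match inl with
              | or_introl e => eq_ind v P (term_nested_ind P HVar HFun v) u e
              | or_intror inl' => args l' u inl'
              end
          end) ts)
  end.
Arguments term_nested_ind [F V] P HVar HFun t.

Lemma subst_Var {F V : Type} (t : term F V) : subst Var t = t.
Proof.
elim/term_nested_ind: t => [//|f ts IH] /=.
by congr Fun; rewrite -[RHS]map_id; apply: List.map_ext_in.
Qed.

Section Renaming.
Context {F V F' V' : Type} (g : F -> F') (h : V -> V').

Fixpoint map_ctx (C : ctx F V) : ctx F' V' :=
  match C with
  | Hole => Hole
  | CFun f l C' r =>
      CFun (g f) (map (map_term g h) l) (map_ctx C') (map (map_term g h) r)
  end.

Lemma map_fill C u : map_term g h (fill C u) = fill (map_ctx C) (map_term g h u).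
Proof. by elim: C => //= f l C IH r; rewrite map_cat /= IH. Qed.

Lemma map_subst {hinv} (hK : cancel h hinv) sigma t :
  map_term g h (subst sigma t) =
  subst (fun y => map_term g h (sigma (hinv y))) (map_term g h t).
Proof.
elim/term_nested_ind: t => [x|f ts IH] /=; first by rewrite hK.
by congr Fun; rewrite -!map_comp; apply: List.map_ext_in.
Qed.

Lemma rstep_map {hinv} (hK : cancel h hinv) l r s t :
  rstep l r s t ->
  rstep (map_term g h l) (map_term g h r) (map_term g h s) (map_term g h t).
Proof.
move=> [C [sigma [-> ->]]].
exists (map_ctx C), (fun y => map_term g h (sigma (hinv y))).
by rewrite !map_fill !(map_subst hK).
Qed.

Lemma map_termK {g' h'} (gK : cancel g g') (hK : cancel h h') (t : term F V) :
  map_term g' h' (map_term g h t) = t.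
Proof.
elim/term_nested_ind: t => [x|f ts IH] /=; first by rewrite hK.
by rewrite gK -map_comp; congr Fun; rewrite -[RHS]map_id; apply: List.map_ext_in.
Qed.

End Renaming.

Section TermIsomorphisms.
Variables (S : signature) (V : finType) (S' : signature) (V' : finType).
Implicit Types (phi : term_iso S V S' V') (l r s t : term S V).

Lemma iso_rstep phi l r s t :
  rstep l r s t ->
  rstep (iso_app phi l) (iso_app phi r) (iso_app phi s) (iso_app phi t).
Proof. by have [hinv hK _] := @isoV_bij _ _ _ _ phi; apply: (rstep_map _ _ hK). Qed.

Lemma iso_rstep_reflect phi l r s t :
  rstep (iso_app phi l) (iso_app phi r) (iso_app phi s) (iso_app phi t) ->
  rstep l r s t.
Proof.
have [ginv gK _] := @isoF_bij _ _ _ _ phi.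
have [hinv hK hinvK] := @isoV_bij _ _ _ _ phi.
by move/(rstep_map ginv hinv hinvK); rewrite /iso_app !(map_termK _ _ gK hK).
Qed.

Lemma witness_local_iso (R : trs S V) (R' : trs S' V')
    (phi : 'I_(nrules R) -> term_iso S V S' V') :
  SVE_witness R R' phi \/ LFE_witness R R' phi \/ LE_witness R R' phi ->
  local_iso R R' phi.
Proof. by case=> [[_ [_ []]]|[[_ [_ []]]|[_ []]]]. Qed.

Lemma local_iso_rewrites (R : trs S V) (R' : trs S' V')
    (phi : 'I_(nrules R) -> term_iso S V S' V') s t :
  local_iso R R' phi -> rewrites R s t ->
  exists i, rewrites R' (iso_app (phi i) s) (iso_app (phi i) t).
Proof.
move=> loc [i step]; exists i.
have [j ruleE] := proj2 (loc _) (ex_intro _ i erefl).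
by exists j; rewrite ruleE; apply: iso_rstep.
Qed.

Lemma iso_rule_rstep_reflect (R : trs S V) i phi s t :
  rstep (iso_rule phi (rule R i)).1 (iso_rule phi (rule R i)).2
        (iso_app phi s) (iso_app phi t) ->
  rewrites R s t.
Proof. by move/iso_rstep_reflect; exists i. Qed.

End TermIsomorphisms.

Definition root_arity {F V : Type} (t : term F V) : nat :=
  if t is Fun _ ts then size ts else 0.

Lemma root_arity_iso {S V S' V'} (phi : term_iso S V S' V') (t : term S V) :
  root_arity (iso_app phi t) = root_arity t.
Proof. by case: t => //= f ts; rewrite size_map. Qed.

Definition distinct_lhs_arities {F V : Type} {n : nat}
    (rho : 'I_n -> term F V * term F V) : Prop :=
  forall i j, i <> j -> root_arity (rho i).1 <> root_arity (rho j).1.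

Lemma distinct_lhs_arities_inj {F V : Type} {n : nat}
    {rho : 'I_n -> term F V * term F V} :
  distinct_lhs_arities rho -> injective rho.
Proof.
move=> dist i j rhoE; apply/eqP/negPn/negP => /eqP neq.
by apply: (dist _ _ neq); rewrite rhoE.
Qed.

(* No two such rules are equivalent, since equivalence preserves root arities. *)
Lemma normal_form_of_arities {S V} (R : trs S V) :
  distinct_lhs_arities (rule R) -> normal_form R.
Proof.
move=> dist i j neq [psi ruleE]; apply: (dist _ _ neq).
by rewrite -ruleE /iso_rule /= root_arity_iso.
Qed.

(* F-equivalence is a special case of equivalence. *)
Lemma F_normal_form_of_normal_form {S V} (R : trs S V) :
  normal_form R -> F_normal_form R.
Proof. by move=> nf i j neq [psi [_ ruleE]]; apply: (nf i j neq); exists psi. Qed.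

Definition good_rule {S : signature} {V : Type} (rho : term S V * term S V) :=
  [/\ wf_term rho.1, wf_term rho.2, forall x, rho.1 <> Var x
    & forall x, List.In x (vars rho.2) -> List.In x (vars rho.1)].

Definition trs_of_rules {S : signature} {V : finType} {n : nat}
    {rho : 'I_n -> term S V * term S V} (dist : distinct_lhs_arities rho)
    (good : forall i, good_rule (rho i)) : trs S V :=
  @TRS S V n rho (distinct_lhs_arities_inj dist)
    (fun i => let: And4 wfl wfr _ _ := good i in conj wfl wfr)
    (fun i => let: And4 _ _ nonvar _ := good i in nonvar)
    (fun i => let: And4 _ _ _ varsr := good i in varsr).

Lemma local_iso_of_rules {S V S' V'} (R : trs S V) (R' : trs S' V')
    (phi : 'I_(nrules R) -> term_iso S V S' V')
    (e : 'I_(nrules R) -> 'I_(nrules R')) :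
  bijective e -> (forall i, iso_rule (phi i) (rule R i) = rule R' (e i)) ->
  local_iso R R' phi.
Proof.
move=> [e' eK e'K] ruleE rho'; split=> [[j <-]|[i <-]].
- by exists (e' j); rewrite ruleE e'K.
- by exists (e i); rewrite ruleE.
Qed.

Lemma rule_rewrites {S V} (R : trs S V) i : rewrites R (rule R i).1 (rule R i).2.
Proof. by exists i, Hole, Var; rewrite /= !subst_Var. Qed.

Lemma rstep_from_constant {F V : Type} {l r t : term F V} {c : F} :
  rstep l r (Fun c [::]) t -> l = Fun c [::] \/ exists x, l = Var x.
Proof.
move=> [[|f ls C rs] [sigma [lhsE _]]] /=; last by case: ls lhsE.
case: l lhsE => [x|f ts /= [-> argsE]]; first by right; exists x.
by left; case: ts argsE.
Qed.

Lemma constant_normal {S V} (R : trs S V) (c : S) t :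
  (forall i, (rule R i).1 <> Fun c [::]) -> ~ rewrites R (Fun c [::]) t.
Proof.
move=> not_lhs [i /rstep_from_constant [|[x lhsE]]]; first exact: not_lhs.
exact: rule_lhs_nonvar lhsE.
Qed.

Fixpoint weight {F V : Type} (w : F -> nat) (t : term F V) : nat :=
  match t with
  | Var _ => 0
  | Fun f ts => w f + sumn (map (weight w) ts)
  end.

Lemma weight_fill_lt {F V : Type} (w : F -> nat) (C : ctx F V) u u' :
  weight w u' < weight w u -> weight w (fill C u') < weight w (fill C u).
Proof.
elim: C => //= f l C IH r lt_u; rewrite !map_cat !sumn_cat /=.
by have := IH lt_u; lia.
Qed.

Lemma terminating_of_measure {S V} (R : trs S V) (m : term S V -> nat) :
  (forall s t, rewrites R s t -> m t < m s) -> terminating R.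
Proof.
move=> dec [seqn steps].
have bound k : m (seqn k) + k <= m (seqn 0).
  elim: k => [|k IH]; first by rewrite addn0.
  by have := dec _ _ (proj2 (steps k)); lia.
by have := bound (m (seqn 0)).+1; lia.
Qed.

Lemma two_cycle_nonterminating {S V} (R : trs S V) {s t : term S V} :
  wf_term s -> wf_term t -> rewrites R s t -> rewrites R t s -> ~ terminating R.
Proof.
move=> wf_s wf_t st ts; apply; exists (fun k => if odd k then t else s) => k /=.
by case: (odd k).
Qed.

Section Example.

Inductive sym := SymA | SymB | SymF.

Definition sym_code (x : sym) : 'I_3 :=
  match x with SymA => inord 0 | SymB => inord 1 | SymF => inord 2 end.
Definition sym_decode (i : 'I_3) : sym :=
  match val i with 0 => SymA | 1 => SymB | _ => SymF end.
Lemma sym_codeK : cancel sym_code sym_decode.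
Proof. by case; rewrite /sym_decode /= inordK. Qed.
HB.instance Definition _ := Finite.copy sym (can_type sym_codeK).

Definition sym_arity (x : sym) : nat := if x is SymF then 1 else 0.
Definition Sab : signature := Signature sym sym_arity.

Definition ta : term Sab unit := Fun SymA [::].
Definition tb : term Sab unit := Fun SymB [::].
Definition app_f (u : term Sab unit) : term Sab unit := Fun SymF [:: u].

Lemma ord2_cases (i : 'I_2) : i = ord0 \/ i = ord_max.
Proof. by case: i => [[|[|n]] lt_i]; [left|right|]; try apply: val_inj. Qed.

Lemma two_rules_distinct (rho : 'I_2 -> term Sab unit * term Sab unit) :
  root_arity (rho ord0).1 = 0 -> root_arity (rho ord_max).1 = 1 ->
  distinct_lhs_arities rho.
Proof.
move=> ar0 ar1 i j.
by case: (ord2_cases i) => ->; case: (ord2_cases j) => -> //= _; rewrite ar0 ar1.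
Qed.

Definition rules_R (i : 'I_2) : term Sab unit * term Sab unit :=
  if i == ord0 then (ta, app_f tb) else (app_f ta, tb).
Definition rules_R' (i : 'I_2) : term Sab unit * term Sab unit :=
  if i == ord0 then (ta, app_f tb) else (app_f tb, ta).

Lemma good_rules_R i : good_rule (rules_R i).
Proof. by case: (ord2_cases i) => ->; split=> //; repeat constructor. Qed.
Lemma good_rules_R' i : good_rule (rules_R' i).
Proof. by case: (ord2_cases i) => ->; split=> //; repeat constructor. Qed.

Definition R_ex : trs Sab unit :=
  trs_of_rules (two_rules_distinct rules_R erefl erefl) good_rules_R.
Definition R'_ex : trs Sab unit :=
  trs_of_rules (two_rules_distinct rules_R' erefl erefl) good_rules_R'.

Lemma R_ex_normal : normal_form R_ex.
Proof. exact/normal_form_of_arities/two_rules_distinct. Qed.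
Lemma R'_ex_normal : normal_form R'_ex.
Proof. exact/normal_form_of_arities/two_rules_distinct. Qed.

Definition swap_ab (x : Sab) : Sab :=
  match x with SymA => SymB | SymB => SymA | SymF => SymF end.
Lemma swap_abK : involutive swap_ab.
Proof. by case. Qed.
Lemma swap_ab_arity (x : Sab) : arity (swap_ab x) = arity x.
Proof. by case: x. Qed.

Definition id_iso : term_iso Sab unit Sab unit :=
  @TermIso Sab unit Sab unit id id (Bijective (frefl id) (frefl id))
    (Bijective (frefl id) (frefl id)) (fun _ => erefl).
Definition swap_iso : term_iso Sab unit Sab unit :=
  @TermIso Sab unit Sab unit swap_ab id (Bijective swap_abK swap_abK)
    (Bijective (frefl id) (frefl id)) swap_ab_arity.

Definition phi_ex (i : 'I_(nrules R_ex)) : term_iso Sab unit Sab unit :=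
  if i == ord0 then id_iso else swap_iso.

Lemma phi_ex_isoV i x : isoV (phi_ex i) x = x.
Proof. by rewrite /phi_ex; case: (_ == _). Qed.

Lemma phi_ex_V_invariant i : V_invariant (phi_ex i).
Proof. by exists erefl => x; rewrite phi_ex_isoV. Qed.

Lemma phi_ex_local_iso : local_iso R_ex R'_ex phi_ex.
Proof.
have id_bij : bijective (@id 'I_2) by exists id.
apply: (@local_iso_of_rules _ _ _ _ R_ex R'_ex phi_ex id id_bij) => i.
by case: (ord2_cases i) => ->.
Qed.

Lemma example_LE : LE_witness R_ex R'_ex phi_ex.
Proof. exact: conj R_ex_normal (conj R'_ex_normal phi_ex_local_iso). Qed.

Lemma example_LFE : LFE_witness R_ex R'_ex phi_ex.
Proof.
have [nf [nf' loc]] := example_LE.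
split; last split; last split; [exact: F_normal_form_of_normal_form..|exact: loc|].
exact: phi_ex_V_invariant.
Qed.

Lemma example_SVE : SVE_witness R_ex R'_ex phi_ex.
Proof.
have [nf [nf' loc]] := example_LE.
split; last split; last split; [exact: F_normal_form_of_normal_form..|exact: loc|].
by move=> i j x; rewrite !phi_ex_isoV.
Qed.

(* b is a normal form in both systems: no left-hand side is b. *)
Lemma tb_normal_R t : ~ rewrites R_ex tb t.
Proof. by apply: constant_normal => i; case: (ord2_cases i) => ->. Qed.
Lemma tb_normal_R' t : ~ rewrites R'_ex tb t.
Proof. by apply: constant_normal => i; case: (ord2_cases i) => ->. Qed.

Lemma wf_ta : wf_term ta. Proof. by repeat constructor. Qed.
Lemma wf_tb : wf_term tb. Proof. by repeat constructor. Qed.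
Lemma wf_app_f {u} : wf_term u -> wf_term (app_f u).
Proof. by constructor; repeat constructor. Qed.

(* With weights a = 2, f = 1, b = 0 both rules of R decrease; their sides are
   ground, so every instance has the same weights. *)
Definition sym_weight (x : sym) : nat :=
  match x with SymA => 2 | SymB => 0 | SymF => 1 end.

Lemma R_ex_terminating : terminating R_ex.
Proof.
apply: (terminating_of_measure R_ex (weight sym_weight)).
move=> s t [i [C [sigma [-> ->]]]]; apply: weight_fill_lt.
by case: (ord2_cases i) => ->.
Qed.

Lemma R'_ex_cycle : ~ terminating R'_ex.
Proof.
exact: (two_cycle_nonterminating R'_ex wf_ta (wf_app_f wf_tb)
          (rule_rewrites R'_ex ord0) (rule_rewrites R'_ex ord_max)).
Qed.

End Example.

Theorem mainTheorem6 :
  (* (i), positive part *)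
  (forall (S : signature) (V : finType) (S' : signature) (V' : finType)
          (R : trs S V) (R' : trs S' V')
          (phi : 'I_(nrules R) -> term_iso S V S' V'),
      (SVE_witness R R' phi \/ LFE_witness R R' phi \/ LE_witness R R' phi) ->
      forall s t : term S V, wf_term s -> wf_term t -> rewrites R s t ->
      exists i : 'I_(nrules R),
        rewrites R' (iso_app (phi i) s) (iso_app (phi i) t)) /\
  (* (i), counterexample *)
  (exists (S : signature) (V : finType) (S' : signature) (V' : finType)
          (R : trs S V) (R' : trs S' V')
          (phi : 'I_(nrules R) -> term_iso S V S' V')
          (s t : term S V) (i : 'I_(nrules R)),
      LFE_witness R R' phi /\ SVE_witness R R' phi /\ LE_witness R R' phi /\
      wf_term s /\ wf_term t /\ rewrites R s t /\
      ~ rewrites R' (iso_app (phi i) s) (iso_app (phi i) t)) /\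
  (* (ii), positive part *)
  (forall (S : signature) (V : finType) (S' : signature) (V' : finType)
          (R : trs S V) (R' : trs S' V')
          (phi : 'I_(nrules R) -> term_iso S V S' V'),
      (SVE_witness R R' phi \/ LFE_witness R R' phi \/ LE_witness R R' phi) ->
      forall (i : 'I_(nrules R)) (s t : term S V), wf_term s -> wf_term t ->
      rstep (iso_rule (phi i) (rule R i)).1 (iso_rule (phi i) (rule R i)).2
            (iso_app (phi i) s) (iso_app (phi i) t) ->
      rewrites R s t) /\
  (* (ii), counterexample *)
  (exists (S : signature) (V : finType) (S' : signature) (V' : finType)
          (R : trs S V) (R' : trs S' V')
          (phi : 'I_(nrules R) -> term_iso S V S' V')
          (s t : term S V) (j : 'I_(nrules R)),
      LFE_witness R R' phi /\
      wf_term s /\ wf_term t /\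
      rewrites R' (iso_app (phi j) s) (iso_app (phi j) t) /\
      ~ rewrites R s t) /\
  (* (iii) *)
  (exists (S : signature) (V : finType) (S' : signature) (V' : finType)
          (R : trs S V) (R' : trs S' V'),
      iso_LFE R R' /\ terminating R /\ ~ terminating R').
Proof.
split.
  move=> S V S' V' R R' phi wit s t _ _.
  exact/local_iso_rewrites/witness_local_iso.
split.
  (* a -> f(b) in R, but phi_2 maps it to b -> f(a) and b is R'-normal. *)
  exists Sab, unit, Sab, unit, R_ex, R'_ex, phi_ex, ta, (app_f tb), ord_max.
  refine (conj example_LFE (conj example_SVE (conj example_LE
           (conj wf_ta (conj (wf_app_f wf_tb) (conj _ (tb_normal_R' _))))))).
  exact: (rule_rewrites R_ex ord0).
split.
  move=> S V S' V' R R' phi _ i s t _ _; exact: iso_rule_rstep_reflect.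
split.
  (* phi_2 maps b -> f(a) to the R'-step a -> f(b), but b is R-normal. *)
  exists Sab, unit, Sab, unit, R_ex, R'_ex, phi_ex, tb, (app_f ta), ord_max.
  refine (conj example_LFE (conj wf_tb (conj (wf_app_f wf_ta)
           (conj _ (tb_normal_R _))))).
  exact: (rule_rewrites R'_ex ord0).
exists Sab, unit, Sab, unit, R_ex, R'_ex.
exact: conj (ex_intro _ phi_ex example_LFE) (conj R_ex_terminating R'_ex_cycle).
Qed.
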